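(* Let $a,b,c\in\mathbb{R}\setminus\{0\}$ with $b^2-4ac>0$, and let $\{P_m(z)\}_{m\geq 0}$ be the sequence of functions of $z$ generated by \[ \sum_{m=0}^\infty P_m(z)\, t^m=\frac{1}{(at^2+bt+c)(1-tz)}. \] Let $\alpha,\beta$ be the zeros of $at^2+bt+c$ with $|\alpha|\leq|\beta|$. Then there exists $N\in\mathbb{N}$ such that for all $m>N$, \[ \mathcal{Z}(P_m)\cap B\!\left(\tfrac12\left(\tfrac{1}{|\alpha|}+\tfrac{1}{|\beta|}\right),0\right)=\emptyset . \]
   Context: A sequence $\{P_m(z)\}$ is generated by $f(t,z)$ if, for each $z\in\mathbb{C}$, $f(t,z)$ is analytic in $t$ in a neighborhood of $t=0$ and $P_m(z)$ is the coefficient of $t^m$ in the power series expansion of $f(t,z)$ in $t$ about $0$. $\mathcal{Z}(P_m)$ is the set of zeros of $P_m$ in $\mathbb{C}$, and $B(R,0)$ is the open disk of radius $R$ centered at $0$. *)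

From Stdlib Require Import Reals.
From Coquelicot Require Import Coquelicot.
Open Scope R_scope.

Fixpoint Cpow (x : C) (n : nat) : C :=
  match n with O => RtoC 1 | S k => Cmult x (Cpow x k) end.

Definition generated_by (P : nat -> C -> C) (f : C -> C -> C) : Prop :=
  forall z : C, exists r : R, 0 < r /\
    forall t : C, Cmod t < r ->
      is_series (fun m => Cmult (P m z) (Cpow t m)) (f t z).

Definition ball0 (rad : R) : C -> Prop := fun z => Cmod z < rad.

From Pilot Require Import Defs.
From Stdlib Require Import Reals Lra Lia.
From Coquelicot Require Import Coquelicot.
Open Scope R_scope.

(* Put u = 1/alpha and v = 1/beta, so that the generating function is
   1 / (c (1 - u t) (1 - v t) (1 - z t)).  Partial fractions in u and z give
   (u - z) c P_m(z) = A_(m+1) - B_(m+1)(z), where A_n = sum_(i+j=n) u^i v^j and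
   B_n(z) = sum_(i+j=n) z^i v^j.  Since (u - v) A_n = u^(n+1) - v^(n+1), |A_n|
   grows like |u|^n, whereas |B_n(z)| <= (n+1) r^n when |z| < r = (|u|+|v|)/2 < |u|.
   Hence A_(m+1) <> B_(m+1)(z), i.e. P_m(z) <> 0, for all large m. *)

Lemma Cpow_pow_n (t : C) (n : nat) : Defs.Cpow t n = pow_n t n.
Proof. induction n as [|n IH]; simpl; [reflexivity | now rewrite IH]. Qed.

Lemma Cmod_pow_n (t : C) (n : nat) : Cmod (pow_n t n) = Cmod t ^ n.
Proof.
  induction n as [|n IH]; simpl; [apply Cmod_1 |].
  change (mult t (pow_n t n)) with (t * pow_n t n)%C. now rewrite Cmod_mult, IH.
Qed.

Lemma is_series_Cpow_pseries (p : nat -> C) (t l : C) :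
  is_series (fun m => (p m * Defs.Cpow t m)%C) l -> is_pseries p t l.
Proof.
  apply is_series_ext. intros m. rewrite Cpow_pow_n. apply Cmult_comm.
Qed.

Lemma norm_sum_n_le {K : AbsRing} {V : NormedModule K} (s : nat -> V) (b : nat -> R) :
  (forall n, norm (s n) <= b n) -> forall n, norm (sum_n s n) <= sum_n b n.
Proof.
  intros Hb n; induction n as [|n IH].
  - rewrite !sum_O; apply Hb.
  - rewrite !sum_Sn. eapply Rle_trans; [apply norm_triangle |].
    apply Rplus_le_compat; auto.
Qed.

Lemma norm_is_series_le {K : AbsRing} {V : NormedModule K}
  (s : nat -> V) (b : nat -> R) (l : V) (L : R) :
  (forall n, norm (s n) <= b n) -> is_series s l -> is_series b L -> norm l <= L.
Proof.
  intros Hb Hs HL.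
  apply (is_lim_seq_le (fun n => norm (sum_n s n)) (sum_n b) (norm l) L).
  - exact (norm_sum_n_le s b Hb).
  - eapply filterlim_comp; [exact Hs | apply filterlim_norm].
  - exact HL.
Qed.

Lemma is_series_terms_bounded {K : AbsRing} {V : NormedModule K} (s : nat -> V) (l : V) :
  is_series s l -> exists M, forall n, norm (s n) <= M.
Proof.
  intros Hs.
  destruct (filterlim_bounded (sum_n s) (ex_intro _ l Hs)) as [M HM].
  assert (HM0 : 0 <= M) by (eapply Rle_trans; [apply (norm_ge_0 (sum_n s O)) | apply HM]).
  exists (2 * M). intros [|n].
  - rewrite <- sum_O. specialize (HM O). lra.
  - assert (Hsn : s (S n) = minus (sum_n s (S n)) (sum_n s n)).
    { rewrite sum_Sn. unfold minus.
      now rewrite plus_comm, plus_assoc, plus_opp_l, plus_zero_l. }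
    rewrite Hsn. eapply Rle_trans; [apply norm_triangle |].
    rewrite norm_opp. pose proof (HM (S n)); pose proof (HM n); lra.
Qed.

(* a_0 = - sum_(k >= 1) a_k t^k, and |a_k t^k| <= M q^k at t = q t0. *)
Lemma pseries_const_le (a : nat -> C) (t0 M q : R) : 0 < t0 -> 0 < q <= 1/2 ->
  (forall k, norm (scal (pow_n (RtoC t0) k) (a k)) <= M) ->
  is_pseries a (RtoC (q * t0)) zero -> Cmod (a O) <= 2 * M * q.
Proof.
  intros Ht0 Hq HM Ha.
  set (t := RtoC (q * t0)) in *.
  assert (HM0 : 0 <= M) by (eapply Rle_trans; [apply Cmod_ge_0 | apply (HM O)]).
  assert (Htail : is_series (fun k => scal (pow_n t (S k)) (a (S k))) (opp (a O))).
  { apply (is_series_incr_1 (fun k => scal (pow_n t k) (a k))).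
    change (plus (opp (a O)) (scal (pow_n t 0) (a O))) with (- a O + 1 * a O)%C.
    replace (- a O + 1 * a O)%C with (RtoC 0) by ring. exact Ha. }
  assert (Hgeom : is_series (fun k => M * q * q ^ k) (M * q * / (1 - q))).
  { apply (is_series_scal_l (V := R_NormedModule) (M * q) _ (/ (1 - q))), is_series_geom.
    rewrite Rabs_pos_eq; lra. }
  assert (Hterm : forall k, norm (scal (pow_n t (S k)) (a (S k))) <= M * q * q ^ k).
  { intros k. specialize (HM (S k)).
    change (Cmod (pow_n (RtoC t0) (S k) * a (S k)) <= M) in HM.
    change (Cmod (pow_n t (S k) * a (S k)) <= M * q * q ^ k).
    rewrite Cmod_mult, Cmod_pow_n, Cmod_R, Rabs_pos_eq in HM by lra.
    unfold t. rewrite Cmod_mult, Cmod_pow_n, Cmod_R, Rabs_pos_eq, Rpow_mult_distr by nra.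
    replace (M * q * q ^ k) with (q ^ S k * M) by (simpl; ring).
    rewrite Rmult_assoc. apply Rmult_le_compat_l; [apply pow_le |]; lra. }
  assert (Hle := norm_is_series_le _ _ _ _ Hterm Htail Hgeom).
  change (Cmod (- a O) <= M * q * / (1 - q)) in Hle. rewrite Cmod_opp in Hle.
  assert (/ (1 - q) <= 2) by (rewrite <- (Rinv_inv 2); apply Rinv_le_contravar; lra).
  assert (0 <= M * q) by nra.
  nra.
Qed.

Lemma pseries_vanishing_const (a : nat -> C) (rho : R) : 0 < rho ->
  (forall t : C, 0 < Cmod t < rho -> is_pseries a t zero) -> a O = zero.
Proof.
  intros Hrho Ha.
  set (t0 := rho / 2).
  destruct (is_series_terms_bounded _ _ (Ha (RtoC t0)
              ltac:(rewrite Cmod_R, Rabs_pos_eq; unfold t0; lra))) as [M HM].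
  assert (HM0 : 0 <= M) by (eapply Rle_trans; [apply Cmod_ge_0 | apply (HM O)]).
  apply Cmod_eq_0, Rle_antisym; [| apply Cmod_ge_0].
  apply Rnot_lt_le. intros Hpos.
  set (q := Rmin (1/2) (Cmod (a O) / (4 * (M + 1)))).
  assert (Hq : 0 < q <= 1/2)
    by (split; [apply Rmin_pos; [| apply Rdiv_lt_0_compat] | apply Rmin_l]; lra).
  assert (Hqa : q * (4 * (M + 1)) <= Cmod (a O)) by (apply Rle_div_r; [lra | apply Rmin_r]).
  assert (Hsmall : Cmod (a O) <= 2 * M * q).
  { apply (pseries_const_le a t0); [unfold t0; lra | exact Hq | exact HM |].
    apply Ha. rewrite Cmod_R, Rabs_pos_eq; unfold t0 in *; nra. }
  nra.
Qed.

Lemma pseries_vanishing_coef (rho : R) : 0 < rho -> forall (n : nat) (a : nat -> C),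
  (forall t : C, 0 < Cmod t < rho -> is_pseries a t zero) -> a n = zero.
Proof.
  intros Hrho n; induction n as [|n IH]; intros a Ha.
  - exact (pseries_vanishing_const a rho Hrho Ha).
  - apply (IH (PS_decr_1 a)). intros t Ht.
    assert (Htn : t <> 0) by (apply Cmod_gt_0; lra).
    assert (Hdecr := is_pseries_decr_1 a t (/ t)%C zero (Cinv_l t Htn) (Ha t Ht)).
    rewrite (pseries_vanishing_const a rho Hrho Ha) in Hdecr.
    change (is_pseries (PS_decr_1 a) t (/ t * (0 + - 0))%C) in Hdecr.
    replace (/ t * (0 + - 0))%C with (RtoC 0) in Hdecr by ring.
    exact Hdecr.
Qed.

Lemma pseries_coef_unique (a b : nat -> C) (f : C -> C) (rho : R) : 0 < rho ->
  (forall t, Cmod t < rho -> is_pseries a t (f t)) ->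
  (forall t, Cmod t < rho -> is_pseries b t (f t)) ->
  forall n, a n = b n.
Proof.
  intros Hrho Ha Hb n.
  assert (Hab : PS_minus a b n = zero).
  { apply (pseries_vanishing_coef rho Hrho). intros t Ht.
    assert (Hminus := is_pseries_minus a b t _ _ (Ha t ltac:(lra)) (Hb t ltac:(lra))).
    change (is_pseries (PS_minus a b) t (f t + - f t)%C) in Hminus.
    replace (f t + - f t)%C with (RtoC 0) in Hminus by ring.
    exact Hminus. }
  change (a n - b n = 0)%C in Hab.
  replace (a n) with (a n - b n + b n)%C by ring. rewrite Hab. ring.
Qed.

(* Coefficient sequences of the constant power series 1, of (1 - w t) p(t) and of
   q(t) / (1 - w t). *)
Definition PS_one (n : nat) : C := match n with O => 1 | S _ => 0 end.

Definition PS_mul_one_sub (w : C) (p : nat -> C) (n : nat) : C :=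
  (p n - w * PS_incr_1 p n)%C.

Fixpoint PS_div_one_sub (w : C) (q : nat -> C) (n : nat) : C :=
  match n with
  | O => q O
  | S k => (q (S k) + w * PS_div_one_sub w q k)%C
  end.

Lemma is_pseries_one (t : C) : is_pseries PS_one t (RtoC 1).
Proof.
  apply (filterlim_ext (fun _ => RtoC 1)); [| apply filterlim_const].
  intros n; induction n as [|n IH].
  - rewrite sum_O. change (RtoC 1 = 1 * 1)%C. ring.
  - rewrite sum_Sn, <- IH. change (RtoC 1 = 1 + pow_n t (S n) * 0)%C. ring.
Qed.

Lemma is_pseries_mul_one_sub (w t l : C) (p : nat -> C) :
  is_pseries p t l -> is_pseries (PS_mul_one_sub w p) t ((1 - w * t) * l)%C.
Proof.
  intros Hp.
  assert (Hshift := is_pseries_scal w _ t _ (Cmult_comm t w) (is_pseries_incr_1 p t l Hp)).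
  assert (H := is_pseries_minus _ _ t _ _ Hp Hshift).
  change (is_pseries (PS_minus p (PS_scal w (PS_incr_1 p))) t (l + - (w * (t * l)))%C) in H.
  replace ((1 - w * t) * l)%C with (l + - (w * (t * l)))%C by ring.
  exact H.
Qed.

Lemma PS_mul_one_sub_eq (w : C) (p q : nat -> C) :
  (forall n, PS_mul_one_sub w p n = q n) -> forall n, p n = PS_div_one_sub w q n.
Proof.
  intros Hpq n; induction n as [|n IH]; cbn [PS_div_one_sub]; rewrite <- Hpq;
    unfold PS_mul_one_sub; simpl.
  - change (p 0%nat = p 0%nat - w * 0)%C. ring.
  - rewrite <- IH. ring.
Qed.

Lemma PS_div_one_sub_one (w : C) (n : nat) : PS_div_one_sub w PS_one n = pow_n w n.
Proof.
  induction n as [|n IH]; cbn [PS_div_one_sub]; [reflexivity |]. rewrite IH.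
  change (0 + w * pow_n w n = w * pow_n w n)%C. ring.
Qed.

Lemma PS_div_one_sub_partial_fraction (x y : C) (q : nat -> C) (n : nat) :
  ((x - y) * PS_div_one_sub x (PS_div_one_sub y q) n
   = PS_div_one_sub x q (S n) - PS_div_one_sub y q (S n))%C.
Proof.
  set (X := PS_div_one_sub x (PS_div_one_sub y q)).
  set (A := PS_div_one_sub x q). set (B := PS_div_one_sub y q).
  induction n as [|n IH]; [cbn; ring |].
  change (X (S n)) with (B (S n) + x * X n)%C.
  change (A (S (S n))) with (q (S (S n)) + x * A (S n))%C.
  change (B (S (S n))) with (q (S (S n)) + y * B (S n))%C.
  transitivity ((x - y) * B (S n) + x * ((x - y) * X n))%C; [ring |].
  rewrite IH. ring.
Qed.

Lemma PS_div_one_sub_eq_of_eq0 (x y : C) (q : nat -> C) (n : nat) :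
  PS_div_one_sub x (PS_div_one_sub y q) n = 0 ->
  PS_div_one_sub x q (S n) = PS_div_one_sub y q (S n).
Proof.
  intros H0. assert (H := PS_div_one_sub_partial_fraction x y q n).
  rewrite H0 in H. set (A := PS_div_one_sub x q (S n)) in *.
  replace A with (A - PS_div_one_sub y q (S n) + PS_div_one_sub y q (S n))%C by ring.
  rewrite <- H. ring.
Qed.

Lemma Cmod_PS_div_one_sub_le (w : C) (q : nat -> C) (r : R) (n : nat) :
  Cmod w <= r -> (forall k, Cmod (q k) <= r ^ k) ->
  Cmod (PS_div_one_sub w q n) <= (INR n + 1) * r ^ n.
Proof.
  intros Hw Hq. assert (Hr : 0 <= r) by (pose proof (Cmod_ge_0 w); lra).
  induction n as [|n IH]; cbn [PS_div_one_sub].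
  - specialize (Hq O). simpl in *. lra.
  - eapply Rle_trans; [apply Cmod_triangle |]. rewrite Cmod_mult.
    assert (Cmod w * Cmod (PS_div_one_sub w q n) <= r * ((INR n + 1) * r ^ n))
      by (apply Rmult_le_compat; auto using Cmod_ge_0).
    specialize (Hq (S n)). rewrite S_INR. simpl pow in *. lra.
Qed.

Lemma one_sub_mul_neq0 (w t : C) : Cmod w * Cmod t < 1 -> (1 - w * t)%C <> 0.
Proof.
  intros Hwt Heq. assert (Hone : (w * t)%C = 1).
  { replace (w * t)%C with (1 - (1 - w * t))%C by ring. rewrite Heq. ring. }
  rewrite <- Cmod_mult, Hone, Cmod_1 in Hwt. lra.
Qed.

Lemma pseries_inv_cubic_coef (c u v z : C) (p : nat -> C) (rho : R) :
  0 < rho -> c <> 0 ->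
  (forall t, Cmod t < rho ->
     is_pseries p t (/ (c * ((1 - u * t) * (1 - v * t) * (1 - z * t))))%C) ->
  forall n, (c * p n)%C = PS_div_one_sub u (PS_div_one_sub z (PS_div_one_sub v PS_one)) n.
Proof.
  intros Hrho Hc Hp.
  set (K := 1 + Cmod u + Cmod v + Cmod z).
  assert (HK : 0 < K /\ Cmod u < K /\ Cmod v < K /\ Cmod z < K)
    by (unfold K; pose proof (Cmod_ge_0 u); pose proof (Cmod_ge_0 v);
        pose proof (Cmod_ge_0 z); lra).
  assert (Hfactor : forall w t, Cmod w < K -> Cmod t < / K -> (1 - w * t)%C <> 0).
  { intros w t Hw Ht. apply one_sub_mul_neq0.
    apply Rle_lt_trans with (K * Cmod t).
    - apply Rmult_le_compat_r; [apply Cmod_ge_0 | lra].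
    - rewrite Rmult_comm. apply Rlt_div_r; [tauto |]. now rewrite Rdiv_1_l. }
  assert (Hcoef : forall n,
      PS_mul_one_sub v (PS_mul_one_sub z (PS_mul_one_sub u (PS_scal c p))) n = PS_one n).
  { apply (pseries_coef_unique _ _ (fun _ => RtoC 1) (Rmin rho (/ K))).
    - apply Rmin_pos; [lra | apply Rinv_0_lt_compat; tauto].
    - intros t Ht.
      assert (Htr : Cmod t < rho) by (eapply Rlt_le_trans; [exact Ht | apply Rmin_l]).
      assert (HtK : Cmod t < / K) by (eapply Rlt_le_trans; [exact Ht | apply Rmin_r]).
      assert (H := is_pseries_mul_one_sub v _ _ _ (is_pseries_mul_one_sub z _ _ _
                     (is_pseries_mul_one_sub u _ _ _
                       (is_pseries_scal c p t _ (Cmult_comm t c) (Hp t Htr))))).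
      change (scal c ?l) with (c * l)%C in H.
      replace (RtoC 1) with ((1 - v * t) * ((1 - z * t) * ((1 - u * t)
                 * (c * / (c * ((1 - u * t) * (1 - v * t) * (1 - z * t)))))))%C;
        [exact H | field; repeat split; try apply Hfactor; tauto].
    - intros t _. apply is_pseries_one. }
  intros n.
  apply (PS_mul_one_sub_eq u (PS_scal c p)), (PS_mul_one_sub_eq z), (PS_mul_one_sub_eq v), Hcoef.
Qed.

Lemma INR_mul_pow_bounded (s : R) : 0 < s < 1 -> exists K, forall n, INR n * s ^ n <= K.
Proof.
  intros Hs. set (d := (1 - s) / s).
  assert (Hd : 0 < d) by (apply Rdiv_lt_0_compat; lra).
  exists (/ d). intros n.
  assert (Hbern := poly n d Hd).
  assert (Hsd : (1 + d) ^ n * s ^ n = 1).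
  { rewrite <- Rpow_mult_distr. replace ((1 + d) * s) with 1 by (unfold d; field; lra).
    apply pow1. }
  assert (0 < s ^ n) by (apply pow_lt; lra).
  assert (Hnd : INR n * s ^ n * d <= 1) by nra.
  apply Rle_div_r in Hnd; [| lra]. now rewrite Rdiv_1_l in Hnd.
Qed.

Lemma eventually_linear_mul_pow_lt (r R0 : R) : 0 <= r < R0 ->
  exists N, forall n, (N < n)%nat -> (2 * INR n + 3) * r ^ n < R0 ^ n.
Proof.
  intros Hr. set (q := r / R0). set (s := (1 + q) / 2).
  assert (Hq : 0 <= q < 1)
    by (split; [apply Rdiv_le_0_compat; lra | apply (Rdiv_lt_1 r R0); lra]).
  destruct (INR_mul_pow_bounded s ltac:(unfold s; lra)) as [K HK].
  assert (HK0 : 0 <= K) by (specialize (HK O); simpl in HK; lra).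
  destruct (pow_lt_1_zero s ltac:(rewrite Rabs_pos_eq; unfold s; lra) (/ (2 * K + 3))
              ltac:(apply Rinv_0_lt_compat; lra)) as [N HN].
  exists N. intros n Hn.
  specialize (HN n ltac:(lia)). rewrite Rabs_pos_eq in HN by (apply pow_le; unfold s; lra).
  (* Since q <= s^2, (2n + 3) q^n <= (2 (n s^n) + 3) s^n <= (2K + 3) s^n. *)
  assert (Hqs : q ^ n <= s ^ n * s ^ n).
  { rewrite <- Rpow_mult_distr. apply pow_incr. unfold s. nra. }
  assert (Hsn : 0 < s ^ n) by (apply pow_lt; unfold s; lra).
  assert (Hs1 : s ^ n <= 1) by (rewrite <- (pow1 n); apply pow_incr; unfold s; lra).
  assert (HKn := HK n). assert (0 <= INR n) by apply pos_INR.
  assert (Hlt : (2 * INR n + 3) * q ^ n < 1).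
  { apply Rle_lt_trans with ((2 * K + 3) * s ^ n); [nra |].
    rewrite Rmult_comm. apply Rlt_div_r; [lra |]. now rewrite Rdiv_1_l. }
  assert (HR0n : 0 < R0 ^ n) by (apply pow_lt; lra).
  replace (r ^ n) with (q ^ n * R0 ^ n)
    by (unfold q; rewrite <- Rpow_mult_distr; f_equal; field; lra).
  nra.
Qed.

Lemma PS_div_one_sub_pow_neq (u v z : C) (r : R) (n : nat) :
  Cmod v < Cmod u -> Cmod v <= r -> Cmod z <= r ->
  (2 * INR n + 3) * r ^ n < Cmod u ^ n ->
  PS_div_one_sub u (PS_div_one_sub v PS_one) n <> PS_div_one_sub z (PS_div_one_sub v PS_one) n.
Proof.
  intros Hvu Hv Hz Hgrowth Heq.
  set (U := Cmod u) in *. set (V := Cmod v) in *.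
  assert (HV0 : 0 <= V) by apply Cmod_ge_0.
  assert (Hpow : forall k, Cmod (PS_div_one_sub v PS_one k) <= r ^ k).
  { intros k. rewrite PS_div_one_sub_one, Cmod_pow_n. fold V. apply pow_incr. lra. }
  assert (Hupper := Cmod_PS_div_one_sub_le z _ r n Hz Hpow).
  assert (Hid := PS_div_one_sub_partial_fraction u v PS_one n).
  rewrite !PS_div_one_sub_one, Heq in Hid.
  assert (Hlower := norm_triangle_inv (pow_n u (S n)) (pow_n v (S n))).
  change (Rabs (Cmod (pow_n u (S n)) - Cmod (pow_n v (S n)))
          <= Cmod (pow_n u (S n) - pow_n v (S n))) in Hlower.
  rewrite <- Hid, Cmod_mult, !Cmod_pow_n in Hlower. fold U V in Hlower.
  apply Rle_trans with (1 := Rle_abs _) in Hlower.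
  assert (Huv : Cmod (u - v) <= 2 * U).
  { unfold Cminus. eapply Rle_trans; [apply Cmod_triangle |]. rewrite Cmod_opp. fold U V. lra. }
  assert (HVn : V ^ S n <= U * r ^ n).
  { simpl. apply Rmult_le_compat; [lra | apply pow_le; lra | lra | apply pow_incr; lra]. }
  assert (Hrn : 0 <= (INR n + 1) * r ^ n).
  { apply Rmult_le_pos; [pose proof (pos_INR n); lra | apply pow_le; lra]. }
  assert (Hprod : Cmod (u - v) * Cmod (PS_div_one_sub z (PS_div_one_sub v PS_one) n)
                  <= 2 * U * ((INR n + 1) * r ^ n))
    by (apply Rmult_le_compat; auto using Cmod_ge_0).
  simpl pow in Hlower, HVn.
  assert (U * U ^ n <= U * ((2 * INR n + 3) * r ^ n)) by lra.
  apply Rmult_le_reg_l in H; lra.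
Qed.

Lemma quadratic_vieta (a b c x y : R) : x <> y ->
  a * x ^ 2 + b * x + c = 0 -> a * y ^ 2 + b * y + c = 0 ->
  a * (x + y) = - b /\ a * x * y = c.
Proof.
  intros Hxy Hx Hy.
  assert (Hsum : a * (x + y) = - b).
  { assert (H : (x - y) * (a * (x + y) + b) = 0) by (simpl in *; nra).
    destruct (Rmult_integral _ _ H) as [H0 | H0]; [exfalso; apply Hxy |]; lra. }
  split; [exact Hsum | simpl in Hx; nra].
Qed.

Lemma quadratic_roots_inv_lt (a b c x y : R) : b <> 0 -> c <> 0 ->
  a * (x + y) = - b -> a * x * y = c -> x <> y -> Rabs x <= Rabs y ->
  Rabs (/ y) < Rabs (/ x).
Proof.
  intros Hb Hc Hsum Hprod Hxy Hle.
  assert (Hx : x <> 0) by (intros ->; apply Hc; lra).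
  assert (Hy : y <> 0) by (intros ->; apply Hc; lra).
  rewrite !Rabs_inv. apply Rinv_lt_contravar; [apply Rmult_lt_0_compat; now apply Rabs_pos_lt |].
  destruct Hle as [Hlt | Heq]; [exact Hlt | exfalso].
  destruct (Rsqr_eq _ _ (Rsqr_eq_asb_1 _ _ Heq)) as [-> | ->]; [now apply Hxy | lra].
Qed.

Lemma quadratic_factor_inv_roots (a b c x y : R) (t : C) : c <> 0 ->
  a * (x + y) = - b -> a * x * y = c ->
  (RtoC a * (t * t) + RtoC b * t + RtoC c)%C
  = (RtoC c * ((1 - RtoC (/ x) * t) * (1 - RtoC (/ y) * t)))%C.
Proof.
  intros Hc Hsum Hprod.
  assert (Hx : x <> 0) by (intros ->; apply Hc; lra).
  assert (Hy : y <> 0) by (intros ->; apply Hc; lra).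
  rewrite !RtoC_inv, <- Hprod by assumption. replace b with (- (a * (x + y))) by lra.
  rewrite !RtoC_mult, RtoC_opp, RtoC_mult, RtoC_plus.
  field. split; intros H; [apply Hy | apply Hx]; now apply RtoC_inj.
Qed.

Theorem mainTheorem11 (a b c : R) (ha : a <> 0) (hb : b <> 0) (hc : c <> 0)
  (hdisc : b ^ 2 - 4 * a * c > 0)
  (P : nat -> C -> C)
  (hP : generated_by P
          (fun t z => Cinv (Cmult (Cplus (Cplus (Cmult (RtoC a) (Cmult t t))
                                                (Cmult (RtoC b) t)) (RtoC c))
                                  (Cminus (RtoC 1) (Cmult t z)))))
  (alpha beta : R)
  (halpha : a * alpha ^ 2 + b * alpha + c = 0)
  (hbeta : a * beta ^ 2 + b * beta + c = 0)
  (hab : alpha <> beta)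
  (hle : Rabs alpha <= Rabs beta) :
  exists N : nat, forall m : nat, (N < m)%nat ->
    forall z : C, ball0 ((/ Rabs alpha + / Rabs beta) / 2) z -> P m z <> RtoC 0.
Proof.
  destruct (quadratic_vieta a b c alpha beta hab halpha hbeta) as [hsum hprod].
  set (u := RtoC (/ alpha)). set (v := RtoC (/ beta)).
  assert (hvu : Cmod v < Cmod u)
    by (unfold u, v; rewrite !Cmod_R; now apply (quadratic_roots_inv_lt a b c)).
  assert (hr : (/ Rabs alpha + / Rabs beta) / 2 = (Cmod u + Cmod v) / 2)
    by (unfold u, v; now rewrite !Cmod_R, !Rabs_inv).
  destruct (eventually_linear_mul_pow_lt ((Cmod u + Cmod v) / 2) (Cmod u)) as [N HN].
  { pose proof (Cmod_ge_0 v); lra. }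
  exists N. intros m hm z hz hPz. unfold ball0 in hz. rewrite hr in hz.
  destruct (hP z) as [rho [hrho hseries]].
  assert (hcoef := pseries_inv_cubic_coef c u v z (fun k => P k z) rho hrho
                     ltac:(intros H; apply hc; now apply RtoC_inj)).
  apply (PS_div_one_sub_pow_neq u v z ((Cmod u + Cmod v) / 2) (S m));
    [lra .. | apply HN; lia |].
  apply PS_div_one_sub_eq_of_eq0. rewrite <- hcoef, hPz; [ring |].
  intros t ht. apply is_series_Cpow_pseries.
  replace (RtoC c * ((1 - u * t) * (1 - v * t) * (1 - z * t)))%C
    with ((RtoC a * (t * t) + RtoC b * t + RtoC c) * (1 - t * z))%C; [now apply hseries |].
  rewrite (quadratic_factor_inv_roots a b c alpha beta t) by assumption. unfold u, v. ring.
Qed.
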